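(* Assume $\gamma<\frac14$. If (a) $\rho^s_{in}+\rho^s_{out}<\frac12$ and (b) $|g(S_s\cap\mathcal T_r)-\mu_r|\ge(1-4\gamma)|g(S_s\cap\mathcal T_r)-\mu_s|$ for all $r\ne s$, then $$|g(S_s)-\mu_s|\le 2(1-\rho^s_{out})|g(S_s\cap\mathcal T_s)-\mu_s|+\frac{2}{1-4\gamma}\sum_{r\ne s}\rho^s_{in}(r)|g(S_s\cap\mathcal T_r)-\mu_r|.$$
   Context: Points $x_1,\dots,x_N$ are real numbers, each drawn from one of $\beta$ distributions with distinct means $\mu_1,\dots,\mu_\beta$; $\mathcal T_s$ is the set of points from distribution $s$, $n_s=|\mathcal T_s|$. $\nu_1,\dots,\nu_\beta$ are real cluster centers, $S_r=\{x_i:|x_i-\nu_r|\le|x_i-\nu_s|\ \forall s\}$, and $S_s$ is assumed nonempty. For a nonempty set $S$, $g(S)=\frac1{|S|}\sum_{x\in S}x$ (terms with empty $S_s\cap\mathcal T_r$ have coefficient zero). $\gamma=\max_{s,\,r\ne s}\frac{|\mu_s-\nu_s|}{|\mu_r-\mu_s|}$. $\rho^s_{in}(r)=\frac{|\mathcal T_r\cap S_s|}{n_s}$, $\rho^s_{in}=\sum_{r\ne s}\rho^s_{in}(r)$, $\rho^s_{out}=\frac{\sum_{r\ne s}|\mathcal T_s\cap S_r|}{n_s}$. *)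

From mathcomp Require Import all_boot all_order all_algebra.
Set Implicit Arguments. Unset Strict Implicit. Unset Printing Implicit Defensive.
Import Order.TTheory GRing.Theory Num.Theory.
Local Open Scope ring_scope.

Section Defs.
Variables (R : realFieldType) (N beta : nat).

(* T_r : indices of the points drawn from distribution r; lab i is the
   distribution of point x_i *)
Definition Tset (lab : 'I_N -> 'I_beta) (r : 'I_beta) : {set 'I_N} :=
  [set i | lab i == r].

(* S_r : Voronoi cell of center nu_r (ties: point lies in every closest cell) *)
Definition Sset (x : 'I_N -> R) (nu : 'I_beta -> R) (r : 'I_beta) : {set 'I_N} :=
  [set i | [forall t, `|x i - nu r| <= `|x i - nu t|]].

(* g(S) = mean of the points in S (equals 0 when S is empty) *)
Definition g (x : 'I_N -> R) (S : {set 'I_N}) : R :=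
  (\sum_(i in S) x i) / (#|S|%:R).

Definition rho_in_r (x : 'I_N -> R) (lab : 'I_N -> 'I_beta) (nu : 'I_beta -> R)
  (s r : 'I_beta) : R :=
  #|Tset lab r :&: Sset x nu s|%:R / #|Tset lab s|%:R.

Definition rho_in (x : 'I_N -> R) (lab : 'I_N -> 'I_beta) (nu : 'I_beta -> R)
  (s : 'I_beta) : R :=
  \sum_(r | r != s) rho_in_r x lab nu s r.

Definition rho_out (x : 'I_N -> R) (lab : 'I_N -> 'I_beta) (nu : 'I_beta -> R)
  (s : 'I_beta) : R :=
  (\sum_(r | r != s) #|Tset lab s :&: Sset x nu r|)%:R / #|Tset lab s|%:R.

Definition gamma (mu nu : 'I_beta -> R) : R :=
  \big[Num.max/0]_(s : 'I_beta) \big[Num.max/0]_(r | r != s)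
     (`|mu s - nu s| / `|mu r - mu s|).
End Defs.

From mathcomp Require Import all_boot all_order all_algebra.
From mathcomp Require Import ring lra.
Set Implicit Arguments. Unset Strict Implicit. Unset Printing Implicit Defensive.
Import Order.TTheory GRing.Theory Num.Theory.
Local Open Scope ring_scope.

(* Splitting S_s by true label, #|S_s| (g(S_s) - mu_s) is the sum over r of
   #|S_s :&: T_r| (g(S_s :&: T_r) - mu_s); for r != s hypothesis (b) bounds the
   r-th term by #|S_s :&: T_r| |g(S_s :&: T_r) - mu_r| / (1 - 4 gamma), so the
   triangle inequality bounds #|S_s| |g(S_s) - mu_s|.  Every point of T_s lies
   in some cell, hence #|T_s| <= #|S_s :&: T_s| + n_s rho_out, and rho_out < 1/2
   turns the bound on #|S_s| |g(S_s) - mu_s| into the claimed one. *)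

Section Means.
Variables (R : realFieldType) (N beta : nat) (x : 'I_N -> R).

Lemma sum_subr_g (A : {set 'I_N}) (c : R) :
  \sum_(i in A) (x i - c) = #|A|%:R * (g x A - c).
Proof.
rewrite sumrB sumr_const mulrBr -[c *+ _]mulr_natl; congr (_ - _).
rewrite /g; have [->|A_neq0] := eqVneq A set0.
  by rewrite big_set0 mul0r mulr0.
by rewrite mulrCA divff ?mulr1 // pnatr_eq0 -lt0n card_gt0.
Qed.

Lemma big_Tset_partition (lab : 'I_N -> 'I_beta) (A : {set 'I_N}) (F : 'I_N -> R) :
  \sum_(i in A) F i = \sum_r \sum_(i in A :&: Tset lab r) F i.
Proof.
rewrite (partition_big lab predT) //=; apply: eq_bigr => r _.
by apply: eq_bigl => i; rewrite !inE.
Qed.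

Lemma card_mul_g_subr_partition (lab : 'I_N -> 'I_beta) (A : {set 'I_N}) (c : R) :
  #|A|%:R * (g x A - c)
  = \sum_r #|A :&: Tset lab r|%:R * (g x (A :&: Tset lab r) - c).
Proof.
rewrite -sum_subr_g (big_Tset_partition lab).
by apply: eq_bigr => r _; rewrite sum_subr_g.
Qed.

Lemma card_mul_dist_g_le (lab : 'I_N -> 'I_beta) (mu : 'I_beta -> R)
    (A : {set 'I_N}) (s : 'I_beta) (k : R) :
  0 < k ->
  (forall r, r != s -> A :&: Tset lab r != set0 ->
     k * `|g x (A :&: Tset lab r) - mu s| <= `|g x (A :&: Tset lab r) - mu r|) ->
  #|A|%:R * `|g x A - mu s|
  <= #|A :&: Tset lab s|%:R * `|g x (A :&: Tset lab s) - mu s|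
     + (\sum_(r | r != s) #|A :&: Tset lab r|%:R
                            * `|g x (A :&: Tset lab r) - mu r|) / k.
Proof.
move=> k_gt0 separated.
rewrite -normr_nat -normrM (card_mul_g_subr_partition lab) (bigD1 s) //=.
apply: le_trans (ler_normD _ _) _; rewrite normrM normr_nat lerD //.
rewrite mulr_suml; apply: le_trans (ler_norm_sum _ _ _) _.
apply: ler_sum => r r_neq_s; rewrite normrM normr_nat -mulrA.
have [->|Ar_neq0] := eqVneq (A :&: Tset lab r) set0; first by rewrite cards0 !mul0r.
by rewrite ler_wpM2l // ler_pdivlMr // mulrC separated.
Qed.

End Means.

Section Cells.
Variables (R : realFieldType) (N beta : nat).
Variables (x : 'I_N -> R) (lab : 'I_N -> 'I_beta) (nu : 'I_beta -> R).

Lemma Sset_cover (s : 'I_beta) (i : 'I_N) : exists r, i \in Sset x nu r.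
Proof.
have [r _ r_min] := @arg_minP _ R _ s predT (fun t => `|x i - nu t|) isT.
by exists r; rewrite inE; apply/forallP => t; apply: r_min.
Qed.

Lemma card_Tset_le_in_out (s : 'I_beta) :
  (#|Tset lab s| <= #|Sset x nu s :&: Tset lab s|
                    + \sum_(r | r != s) #|Tset lab s :&: Sset x nu r|)%N.
Proof.
rewrite setIC -{1}(cardsID (Sset x nu s) (Tset lab s)) leq_add2l -sum1_card.
apply: (@leq_trans (\sum_(i in Tset lab s :\: Sset x nu s)
                      \sum_(r | r != s) (i \in Sset x nu r))).
  apply: leq_sum => i; rewrite inE => /andP[i_notin_s _].
  have [r i_in_r] := Sset_cover s i.
  have r_neq_s : r != s by apply: contraNneq i_notin_s => <-.
  by rewrite (bigD1 r) //= i_in_r.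
rewrite exchange_big /=; apply: leq_sum => r _.
rewrite -big_mkcondr /= sum1dep_card; apply: subset_leq_card.
by apply/subsetP => i; rewrite !inE => /andP[/andP[_ ->] ->].
Qed.

Lemma rho_in_ge0 (s : 'I_beta) : 0 <= rho_in x lab nu s.
Proof. by apply: sumr_ge0 => r _; rewrite divr_ge0. Qed.

End Cells.

(* [cS], [cs] stand for #|S_s| and #|S_s :&: T_s|, [O] for n_s rho_out. *)
Lemma cluster_mean_bound (R : realFieldType) (n O cs cS a D P k : R) :
  0 < n -> O / n < 1 / 2 -> n <= cs + O -> cs <= cS ->
  0 <= a -> 0 <= D -> 0 <= P -> 0 < k ->
  cS * a <= cs * D + P / k ->
  a <= 2 * (1 - O / n) * D + 2 / k * (P / n).
Proof.
move=> n_gt0 O_small n_le cs_le a_ge0 D_ge0 P_ge0 k_gt0 weighted.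
have twiceO_lt_n : 2 * O < n by move: O_small; rewrite ltr_pdivrMr //; lra.
have Q_ge0 : 0 <= P / k by rewrite divr_ge0 // ltW.
have -> : 2 * (1 - O / n) * D + 2 / k * (P / n) = (2 * (n - O) * D + 2 * (P / k)) / n.
  by field; rewrite !gt_eqF.
rewrite ler_pdivlMr //; move: (P / k) Q_ge0 weighted => Q Q_ge0 weighted.
(* If D < a then cs (a - D) <= Q, and cs >= n - O > n / 2. *)
have [a_le_D|D_lt_a] := leP a D; nra.
Qed.

Theorem lemma10 (R : realFieldType) (N beta : nat)
  (x : 'I_N -> R) (lab : 'I_N -> 'I_beta) (mu nu : 'I_beta -> R) (s : 'I_beta)
  (Hmu : injective mu)
  (HS : Sset x nu s != set0)
  (Hns : (0 < #|Tset lab s|)%N)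
  (Hgamma : gamma mu nu < 1 / 4)
  (Ha : rho_in x lab nu s + rho_out x lab nu s < 1 / 2)
  (Hb : forall r, r != s -> Sset x nu s :&: Tset lab r != set0 ->
        `|g x (Sset x nu s :&: Tset lab r) - mu r|
          >= (1 - 4 * gamma mu nu) * `|g x (Sset x nu s :&: Tset lab r) - mu s|) :
  `|g x (Sset x nu s) - mu s|
    <= 2 * (1 - rho_out x lab nu s) * `|g x (Sset x nu s :&: Tset lab s) - mu s|
       + 2 / (1 - 4 * gamma mu nu) *
         \sum_(r | r != s) rho_in_r x lab nu s r
                             * `|g x (Sset x nu s :&: Tset lab r) - mu r|.
Proof.
have k_gt0 : 0 < 1 - 4 * gamma mu nu by lra.
have rho_in_sum : \sum_(r | r != s) rho_in_r x lab nu s r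
                     * `|g x (Sset x nu s :&: Tset lab r) - mu r|
  = (\sum_(r | r != s) #|Sset x nu s :&: Tset lab r|%:R
                        * `|g x (Sset x nu s :&: Tset lab r) - mu r|) / #|Tset lab s|%:R.
  by rewrite mulr_suml; apply: eq_bigr => r _; rewrite /rho_in_r setIC mulrAC.
rewrite rho_in_sum; apply: (cluster_mean_bound (cs := #|Sset x nu s :&: Tset lab s|%:R)
                                           (cS := #|Sset x nu s|%:R)).
- by rewrite ltr0n.
- exact: le_lt_trans (ler_wpDl (rho_in_ge0 x lab nu s) (lexx _)) Ha.
- by rewrite -natrD ler_nat card_Tset_le_in_out.
- by rewrite ler_nat subset_leq_card // subsetIl.
- exact: normr_ge0.
- exact: normr_ge0.
- by apply: sumr_ge0 => r _; rewrite mulr_ge0.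
- exact: k_gt0.
- exact: card_mul_dist_g_le.
Qed.
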